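(* For every $x \in \mathbb{R}^z$ and $\ell \in \mathbb{N}$ there exists a time series $x' \in \mathrm{set}(x)^{z'}$ with $z' \in O\big(2^{|\mathrm{set}(x)|^{(2\ell + 2)}}\big)$ such that $D_{(x,\ell)} = D_{(x',\ell)}$.
   Context: For $x=(x_1,\dots,x_z)\in\mathbb{R}^z$, $\mathrm{set}(x)=\{x_i:1\le i\le z\}$. A traversal between sequences of lengths $z$ and $\ell$ is a sequence of index pairs from $(1,1)$ to $(z,\ell)$ where each step increases each index by $0$ or $1$ and at least one index by $1$; $\mathcal{T}_{z,\ell}$ is the set of traversals. For $T\in\mathcal{T}_{z,\ell}$, the traversal sectors are $S_j^{(x,T)}=\{x_i:(i,j)\in T\}$ for $j\in[\ell]$, and the $\ell$-profile of $(x,T)$ is $\big((\min S_j^{(x,T)},\max S_j^{(x,T)})\big)_{j=1}^{\ell}$. $D_{(x,\ell)}$ is the set of all $\ell$-profiles of $(x,T)$ over $T\in\mathcal{T}_{z,\ell}$ (for $x'\in\mathbb{R}^{z'}$, over $T\in\mathcal{T}_{z',\ell}$). *)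

From mathcomp Require Import all_boot all_order all_algebra.
From mathcomp Require Import reals.
Set Implicit Arguments. Unset Strict Implicit. Unset Printing Implicit Defensive.
Import Order.TTheory GRing.Theory Num.Theory.
Local Open Scope ring_scope.

Section Defs.
Variable R : realType.

(* A time series x = (x_1,...,x_z) is a sequence x : seq R with z = size x;
   entry x_i (1-based) is nth 0 x i.-1. *)
Definition entry (x : seq R) (i : nat) : R := nth 0 x i.-1.

Definition trav_step (p q : nat * nat) : bool :=
  [&& ((q.1 == p.1) || (q.1 == p.1.+1)),
      ((q.2 == p.2) || (q.2 == p.2.+1)) &
      (q != p)].

Definition traversal (z l : nat) (T : seq (nat * nat)) : Prop :=
  exists T' : seq (nat * nat),
    T = (1%N, 1%N) :: T' /\ path trav_step (1%N, 1%N) T' /\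
    last (1%N, 1%N) T' = (z, l).

Definition sector (x : seq R) (T : seq (nat * nat)) (j : nat) : seq R :=
  [seq entry x p.1 | p <- T & p.2 == j].

Definition seqmin (s : seq R) : R := foldr Order.min (head 0 s) (behead s).
Definition seqmax (s : seq R) : R := foldr Order.max (head 0 s) (behead s).

Definition profile (x : seq R) (l : nat) (T : seq (nat * nat)) : seq (R * R) :=
  [seq (seqmin (sector x T j), seqmax (sector x T j)) | j <- iota 1 l].

Definition Dprof (x : seq R) (l : nat) : seq (R * R) -> Prop :=
  fun p => exists T, traversal (size x) l T /\ p = profile x l T.

End Defs.

From mathcomp Require Import all_boot all_order all_algebra.
From mathcomp Require Import boolp reals zify.
Import Order.TTheory GRing.Theory Num.Theory.

Set Implicit Arguments. Unset Strict Implicit. Unset Printing Implicit Defensive.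

(* Traversals grow one step at a time, so the j-profiles of u ++ [:: a] are
   determined by the profiles of u and of u ++ [:: a] of lengths j and j - 1
   (extend the last sector by a, open a new sector at a, or both).  Hence if two
   prefixes u, u' have the same profiles of every length j <= l, so do u ++ v
   and u' ++ v for every suffix v.  The profiles of length <= l of a prefix of x
   form a subset of the at most n^(2l+2) sequences of length <= l over
   set(x)^2, n = |set(x)|; so when n >= 2, among more than 2^(n^(2l+2))
   prefixes two agree, and the segment between them can be cut out without
   changing D_(x,l).  When n = 1, x has the same profiles as its first entry. *)

Lemma foldr_lcomm (T : Type) (op : T -> T -> T) a b s :
  left_commutative op -> foldr op (op a b) s = op a (foldr op b s).
Proof. by move=> opCA; elim: s => //= c s ->; rewrite opCA. Qed.

Lemma nseqSr (T : Type) n (a : T) : nseq n.+1 a = rcons (nseq n a) a.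
Proof. by rewrite -addn1 nseqD cats1. Qed.

Lemma nseq_undup_le1 (T : eqType) (s : seq T) a :
  a \in s -> (size (undup s) <= 1)%N -> s = nseq (size s) a.
Proof.
rewrite -mem_undup => as1; case E: (undup s) as1 => [|b [|]] //.
rewrite inE => /eqP-> _; apply/all_pred1P/allP => c.
by rewrite -mem_undup E inE.
Qed.

Section Words.
Variables (T : eqType) (A : seq T).

Fixpoint words n : seq (seq T) :=
  if n is n'.+1 then [seq a :: w | a <- A, w <- words n'] else [:: [::]].

Fixpoint words_upto n : seq (seq T) :=
  if n is n'.+1 then words n ++ words_upto n' else words 0.

Lemma mem_words w : all (mem A) w -> w \in words (size w).
Proof. by elim: w => [|a w IH] //= /andP[aA /IH]; apply: allpairs_f. Qed.

Lemma mem_words_upto n w : (size w <= n)%N -> all (mem A) w -> w \in words_upto n.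
Proof.
elim: n => [|n IH] w_le wA; first by case: w w_le wA.
rewrite -[words_upto _]/(words n.+1 ++ words_upto n) mem_cat.
move: w_le; rewrite leq_eqVlt => /orP[/eqP <-|w_lt]; first by rewrite mem_words.
by rewrite IH ?orbT.
Qed.

Lemma size_words n : size (words n) = (size A ^ n)%N.
Proof. by elim: n => //= n IH; rewrite size_allpairs IH expnS. Qed.

Lemma size_words_upto n : (1 < size A)%N -> (size (words_upto n) <= size A ^ n.+1)%N.
Proof.
move=> A_gt1; elim: n => [|n IH]; first by rewrite expn1 ltnW.
rewrite -[words_upto _]/(words n.+1 ++ words_upto n) size_cat size_words.
apply: (leq_trans (leq_add (leqnn _) IH)).
by rewrite addnn -mul2n [X in (_ <= X)%N]expnS leq_mul.
Qed.

End Words.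

Section Profiles.
Variable R : realType.
Implicit Types (x u w : seq R) (a : R) (T : seq (nat * nat)) (P Q : seq (R * R)).

Lemma seqmin_rcons s a : s != [::] -> seqmin (rcons s a) = Order.min (seqmin s) a.
Proof.
by case: s => // b s _; rewrite /seqmin /= foldr_rcons foldr_lcomm 1?minC //; apply: minCA.
Qed.

Lemma seqmax_rcons s a : s != [::] -> seqmax (rcons s a) = Order.max (seqmax s) a.
Proof.
by case: s => // b s _; rewrite /seqmax /= foldr_rcons foldr_lcomm 1?maxC //; apply: maxCA.
Qed.

Lemma sector_rcons x T q j : sector x (rcons T q) j =
  if q.2 == j then rcons (sector x T j) (entry x q.1) else sector x T j.
Proof. by rewrite /sector filter_rcons; case: ifP; rewrite ?map_rcons. Qed.

Lemma sector_above x T j : (forall p, p \in T -> (p.2 <= j)%N) -> sector x T j.+1 = [::].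
Proof.
move=> T_le; rewrite /sector (@eq_in_filter _ _ pred0) ?filter_pred0 //.
by move=> p /T_le p_le; apply/negbTE; rewrite neq_ltn ltnS p_le.
Qed.

Lemma profileS x j T : profile x j.+1 T =
  rcons (profile x j T) (seqmin (sector x T j.+1), seqmax (sector x T j.+1)).
Proof. by rewrite /profile -(addn1 j) iotaD map_cat cats1 add1n addn1. Qed.

Lemma profile_rcons x j T i :
  let S := sector x T j.+1 in let a := entry x i in
  profile x j.+1 (rcons T (i, j.+1)) =
  rcons (profile x j T) (seqmin (rcons S a), seqmax (rcons S a)).
Proof.
rewrite profileS sector_rcons /= eqxx; congr rcons; apply/eq_in_map => k.
rewrite mem_iota add1n ltnS => /andP[_ k_le].
by rewrite sector_rcons /= eqn_leq ltnNge k_le.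
Qed.

Lemma profile_rcons_fresh x j T i : (forall p, p \in T -> (p.2 <= j)%N) ->
  profile x j.+1 (rcons T (i, j.+1)) = rcons (profile x j T) (entry x i, entry x i).
Proof. by move=> T_le; rewrite profile_rcons sector_above. Qed.

Lemma profile_rcons_extend x j T i :
  let S := sector x T j.+1 in let a := entry x i in S != [::] ->
  profile x j.+1 (rcons T (i, j.+1)) =
  rcons (profile x j T) (Order.min (seqmin S) a, Order.max (seqmax S) a).
Proof. by move=> S a S_ne0; rewrite profile_rcons seqmin_rcons ?seqmax_rcons. Qed.

Inductive trav : nat -> nat -> seq (nat * nat) -> Prop :=
| trav_start : trav 1 1 [:: (1, 1)]
| trav_right z j T : trav z j.+1 T -> trav z.+1 j.+1 (rcons T (z.+1, j.+1))
| trav_up z j T : trav z.+1 j T -> trav z.+1 j.+1 (rcons T (z.+1, j.+1))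
| trav_diag z j T : trav z j T -> trav z.+1 j.+1 (rcons T (z.+1, j.+1)).

Lemma trav_gt0 z j T : trav z j T -> (0 < z)%N /\ (0 < j)%N.
Proof. by case. Qed.

Lemma trav_last z j T : trav z j T -> (z, j) \in T.
Proof. by case=> *; rewrite ?mem_rcons mem_head. Qed.

Lemma trav_snd_le z j T : trav z j T -> forall p, p \in T -> (p.2 <= j)%N.
Proof.
elim=> [|z' j' T' _ IH|z' j' T' _ IH|z' j' T' _ IH] p;
  first by rewrite inE => /eqP->.
all: rewrite mem_rcons inE => /predU1P[-> //|/IH/leq_trans]; apply.
all: by rewrite ?leqnSn.
Qed.

Lemma trav_stepP p q : trav_step p q ->
  [\/ q = (p.1.+1, p.2), q = (p.1, p.2.+1) | q = (p.1.+1, p.2.+1)].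
Proof.
case: p q => [z j] [z' j'] /and3P[/= /orP[]/eqP-> /orP[]/eqP-> neq].
- by rewrite eqxx in neq.
- exact: Or32.
- exact: Or31.
- exact: Or33.
Qed.

Lemma traversalP z j T : traversal z j T <-> trav z j T.
Proof.
split.
- case=> T' [-> [path_T' last_T']].
  elim/last_ind: T' z j path_T' last_T' => [|T' q IH] z j.
    by move=> _ [<- <-]; constructor.
  rewrite rcons_path last_rcons => /andP[path_T' step] q_eq; subst q.
  case E: (last _ T') step => [z0 j0] step.
  have {E IH} tr0 := IH z0 j0 path_T' E; have [z0_gt0 j0_gt0] := trav_gt0 tr0.
  case/trav_stepP: step => /= [[-> ->]|[-> ->]|[-> ->]]; rewrite -rcons_cons.
  + by case: j0 j0_gt0 tr0 => // j0 _; apply: trav_right.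
  + by case: z0 z0_gt0 tr0 => // z0 _; apply: trav_up.
  + exact: trav_diag.
- elim=> [|z' j' T' _ [T'' [E [path_T'' last_T'']]]|z' j' T' _ [T'' [E [path_T'' last_T'']]]
          |z' j' T' _ [T'' [E [path_T'' last_T'']]]]; first by exists [::].
  all: exists (rcons T'' (z'.+1, j'.+1)).
  all: rewrite E rcons_cons rcons_path last_rcons path_T'' last_T''.
  all: by rewrite /trav_step /= !eqxx ?orbT /= xpair_eqE ?eqxx ?andbF ?(gtn_eqF (ltnSn _)).
Qed.

Lemma sector_neq0 x T i j : (i, j) \in T -> sector x T j != [::].
Proof.
move=> ijT; rewrite -size_eq0 size_map size_filter -lt0n -has_count.
by apply/hasP; exists (i, j); rewrite /= ?eqxx.
Qed.

Lemma entry_catS u a y : entry (u ++ a :: y) (size u).+1 = a.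
Proof. by rewrite /entry nth_cat ltnn subnn. Qed.

(* The constructors mirror the last step of a traversal; [prof_diag] applied to
   [prof_nil] is its start at (1, 1). *)
Inductive prof : seq R -> nat -> seq (R * R) -> Prop :=
| prof_nil : prof [::] 0 [::]
| prof_right u a j Q b c : prof u j.+1 (rcons Q (b, c)) ->
    prof (rcons u a) j.+1 (rcons Q (Order.min b a, Order.max c a))
| prof_up u a j Q : prof (rcons u a) j Q -> prof (rcons u a) j.+1 (rcons Q (a, a))
| prof_diag u a j Q : prof u j Q -> prof (rcons u a) j.+1 (rcons Q (a, a)).

Lemma prof0 w Q : prof w 0 Q -> w = [::] /\ Q = [::].
Proof. by move E: 0%N => j pr; case: pr E. Qed.

Lemma prof_size w j P : prof w j P -> size P = j.
Proof. by elim=> // [u a k Q b c _|u a k Q _|u a k Q _]; rewrite !size_rcons // => ->. Qed.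

Lemma prof_mem w j P : prof w j P -> forall p, p \in P -> (p.1 \in w) && (p.2 \in w).
Proof.
have sub_rcons u a : {subset u <= rcons u a} by move=> b; rewrite mem_rcons inE orbC => ->.
have mem_rcons_pair u a p :
    (p.1 \in u) && (p.2 \in u) -> (p.1 \in rcons u a) && (p.2 \in rcons u a).
  by case/andP=> /sub_rcons-> /sub_rcons->.
elim=> [|u a k Q b c _ IH|u a k Q _ IH|u a k Q _ IH] // p;
  rewrite mem_rcons inE => /predU1P[->|pQ] /=.
- have /IH/andP[bu cu] : (b, c) \in rcons Q (b, c) by rewrite mem_rcons mem_head.
  rewrite !mem_rcons minEle maxEle.
  by do 2!case: ifP => _; rewrite !inE ?eqxx ?bu ?cu ?orbT.
- by apply/mem_rcons_pair/IH; rewrite mem_rcons inE pQ orbT.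
- by rewrite mem_rcons mem_head.
- exact: IH.
- by rewrite mem_rcons mem_head.
- exact/mem_rcons_pair/IH.
Qed.

Lemma prof_take_profile x z j T :
  trav z j T -> (z <= size x)%N -> prof (take z x) j (profile x j T).
Proof.
elim=> [|i k U tr IH|i k U tr IH|i k U tr IH] i_le.
- rewrite -[[:: _]]/(rcons [::] (1, 0.+1)) profile_rcons_fresh // (take_nth 0%R) // take0.
  exact: prof_diag prof_nil.
- rewrite profile_rcons_extend ?(sector_neq0 _ (trav_last tr)) // (take_nth 0%R) //.
  by apply: prof_right; rewrite -profileS; apply/IH/ltnW.
- rewrite profile_rcons_fresh ?(take_nth 0%R) //; last exact: trav_snd_le tr.
  by apply: prof_up; rewrite -(take_nth 0%R) //; apply: IH.
- rewrite profile_rcons_fresh ?(take_nth 0%R) //; last exact: trav_snd_le tr.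
  by apply/prof_diag/IH/ltnW.
Qed.

Lemma trav_of_prof w j P y : prof w j P -> (0 < j)%N ->
  exists2 T, trav (size w) j T & P = profile (w ++ y) j T.
Proof.
move=> pr; elim: pr y => [|u a k Q b c pr IH|u a [|k] Q pr IH|u a [|k] Q pr IH] y // _.
- have [T tr] := IH (a :: y) isT; rewrite profileS => /rcons_inj[-> -> ->].
  exists (rcons T ((size u).+1, k.+1)); first by rewrite size_rcons; apply: trav_right.
  by rewrite cat_rcons profile_rcons_extend ?entry_catS ?(sector_neq0 _ (trav_last tr)).
- by have [/eqP] := prof0 pr; rewrite -size_eq0 size_rcons.
- have [T tr ->] := IH y isT; rewrite size_rcons in tr.
  exists (rcons T ((size u).+1, k.+2)); first by rewrite size_rcons; apply: trav_up.
  by rewrite cat_rcons profile_rcons_fresh ?entry_catS //; exact: trav_snd_le tr.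
- have [-> ->] := prof0 pr; exists [:: (1, 1)]; first exact: trav_start.
  by rewrite -[[:: _]]/(rcons [::] (1, 0.+1)) profile_rcons_fresh.
- have [T tr ->] := IH (a :: y) isT.
  exists (rcons T ((size u).+1, k.+2)); first by rewrite size_rcons; apply: trav_diag.
  by rewrite cat_rcons profile_rcons_fresh ?entry_catS //; exact: trav_snd_le tr.
Qed.

Lemma Dprof_prof x l P : Dprof x l P <-> (0 < l)%N /\ prof x l P.
Proof.
split=> [[T [/traversalP tr ->]]|[l_gt0 /trav_of_prof-/(_ [::] l_gt0)[T tr ->]]].
  by split; [case: (trav_gt0 tr) | rewrite -{1}(take_size x); apply: prof_take_profile].
by exists T; rewrite cats0; split=> //; apply/traversalP.
Qed.

Definition prof_equiv l u u' :=
  forall j, (j <= l)%N -> forall P, prof u j P <-> prof u' j P.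

Lemma prof_equiv_sym l u u' : prof_equiv l u u' -> prof_equiv l u' u.
Proof. by move=> equ j j_le P; rewrite equ. Qed.

Lemma prof_equiv_trans l u1 u2 u3 :
  prof_equiv l u1 u2 -> prof_equiv l u2 u3 -> prof_equiv l u1 u3.
Proof. by move=> equ12 equ23 j j_le P; rewrite equ12 ?equ23. Qed.

Lemma Dprof_eq l x x' : prof_equiv l x x' -> Dprof x l = Dprof x' l.
Proof. by move=> equ; rewrite predeqE => P; rewrite !Dprof_prof equ. Qed.

Lemma prof_catr_sub l u u' v j P :
  (forall k Q, (k <= l)%N -> prof u k Q -> prof u' k Q) ->
  (j <= l)%N -> prof (u ++ v) j P -> prof (u' ++ v) j P.
Proof.
move=> sub + pr; move Es: (u ++ v) pr => s pr.
elim: pr v Es => [|w a k Q b c pr IH|w a k Q pr IH|w a k Q pr IH] v;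
  case/lastP: v => [|v d]; rewrite ?cats0 => Ew j_le.
all: try by apply: sub => //; rewrite Ew;
  by [exact: prof_nil|exact: prof_right|exact: prof_up|exact: prof_diag].
  by move/(congr1 size): Ew; rewrite size_cat size_rcons addnS.
all: move: Ew; rewrite -rcons_cat => /rcons_inj[Ew Ea]; subst w a; rewrite -rcons_cat.
- exact/prof_right/IH.
- apply/prof_up; rewrite rcons_cat; apply: (IH _ _ (ltnW j_le)).
  by rewrite rcons_cat.
- exact/prof_diag/IH/ltnW.
Qed.

Lemma prof_equiv_catr l u u' v : prof_equiv l u u' -> prof_equiv l (u ++ v) (u' ++ v).
Proof.
by move=> equ j j_le P; split; apply: prof_catr_sub j_le => k Q k_le; rewrite equ.
Qed.

Lemma prof_nseq c z j P : prof (nseq z.+1 c) j P <-> (0 < j)%N /\ P = nseq j (c, c).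
Proof.
split=> [pr | [j_gt0 ->]].
  split; first by case: j pr => // /prof0[].
  rewrite -(prof_size pr); apply/all_pred1P/allP => -[a b] /(prof_mem pr).
  by rewrite !mem_nseq /= => /andP[/eqP-> /eqP->].
case: j j_gt0 => // j _; elim: z => [|z IH].
  elim: j => [|j IH]; first exact: (prof_diag c prof_nil).
  by rewrite [nseq j.+2 _]nseqSr; apply: (@prof_up [::] c).
have := @prof_right (nseq z.+1 c) c j (nseq j (c, c)) c c.
by rewrite minxx maxxx -!nseqSr; apply.
Qed.

Lemma prof_equiv_nseq l c z : prof_equiv l (nseq z.+1 c) [:: c].
Proof. by move=> j _ P; rewrite (prof_nseq c 0) prof_nseq. Qed.

Lemma prof_equiv_pigeonhole (V : seq R) l (I : finType) (f : I -> seq R) :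
  (1 < size V)%N -> (forall i, {subset f i <= V}) ->
  (2 ^ (size V ^ (2 * l + 2)) < #|I|)%N ->
  exists i1 i2, i1 != i2 /\ prof_equiv l (f i1) (f i2).
Proof.
move=> V_gt1 fV card_I.
pose S := undup (words_upto [seq (a, b) | a <- V, b <- V] l).
pose code i : {set seq_sub S} := [set P | `[< prof (f i) (size (ssval P)) (ssval P) >]].
have card_code : (#|{set seq_sub S}| <= 2 ^ (size V ^ (2 * l + 2)))%N.
  rewrite -cardsT -powersetT card_powerset cardsT card_seq_sub ?undup_uniq // leq_pexp2l //.
  have VV_gt1 : (1 < size [seq (a, b) | a <- V, b <- V])%N.
    by rewrite size_allpairs (leq_trans V_gt1) // leq_pmulr // ltnW.
  apply: leq_trans (size_undup _) (leq_trans (size_words_upto _ VV_gt1) _).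
  by rewrite size_allpairs mulnn -expnM mulnSr.
have /injectivePn[i1 [i2 i_neq code_eq]] : ~~ injectiveb code.
  apply: contraL card_I => /injectiveP/leq_card card_le.
  by rewrite -leqNgt (leq_trans card_le card_code).
exists i1, i2; split=> // j j_le P.
have transfer i i' : code i = code i' -> prof (f i) j P -> prof (f i') j P.
  move=> eq_code pr; have PS : P \in S.
    rewrite mem_undup mem_words_upto ?(prof_size pr) //.
    by apply/allP => -[a b] /(prof_mem pr) /andP[/fV aV /fV bV]; apply: allpairs_f.
  have : SeqSub PS \in code i by rewrite inE; apply/asboolP; rewrite (prof_size pr).
  by rewrite eq_code inE (prof_size pr) => /asboolP.
by split; apply: transfer.
Qed.

Lemma prof_equiv_short (V : seq R) l x : (1 < size V)%N -> {subset x <= V} ->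
  exists x', [/\ {subset x' <= x}, (size x' <= 2 ^ (size V ^ (2 * l + 2)))%N
               & prof_equiv l x x'].
Proof.
move=> V_gt1; have [n] := ubnP (size x); elim: n x => // n IH x; rewrite ltnS => x_le xV.
have [x_small | x_big] := leqP (size x) (2 ^ (size V ^ (2 * l + 2))).
  by exists x; split=> // j _ P.
have card_I : (2 ^ (size V ^ (2 * l + 2)) < #|'I_(size x).+1|)%N.
  by rewrite card_ord ltnS ltnW.
have [k [k' [k_neq equ]]] :=
  prof_equiv_pigeonhole (f := fun k : 'I_(size x).+1 => take k x)
    V_gt1 (fun k a ka => xV a (mem_take ka)) card_I.
have {k k' k_neq equ} [k1 [k2 [k_lt k2_le equ]]] : exists k1 k2,
    [/\ (k1 < k2)%N, (k2 <= size x)%N & prof_equiv l (take k2 x) (take k1 x)].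
  case: (ltngtP k k') => [lt | gt | /val_inj eq]; last by rewrite eq eqxx in k_neq.
    by exists k, k'; split; [| rewrite -ltnS | apply: prof_equiv_sym].
  by exists k', k; split; rewrite // -ltnS.
pose y := take k1 x ++ drop k2 x.
have equ_xy : prof_equiv l x y by rewrite -{1}(cat_take_drop k2 x); apply: prof_equiv_catr.
have y_sub : {subset y <= x} by move=> a; rewrite mem_cat => /orP[/mem_take|/mem_drop].
have y_lt : (size y < size x)%N by rewrite size_cat size_takel ?size_drop; lia.
have [x' [x'_sub x'_le equ']] :=
  IH y (leq_trans y_lt x_le) (fun a ya => xV a (y_sub a ya)).
by exists x'; split=> // [a /x'_sub/y_sub //|]; apply: prof_equiv_trans equ'.
Qed.

End Profiles.

Local Open Scope ring_scope.

Theorem lemma9p11 (R : realType) :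
  exists C : nat, forall (x : seq R) (l : nat),
    exists x' : seq R,
      all (fun a => a \in x) x' /\
      (size x' <= C * 2 ^ ((size (undup x)) ^ (2 * l + 2)))%N /\
      Dprof x l = Dprof x' l.
Proof.
exists 1%N => x l; rewrite mul1n.
have [V_gt1 | V_le1] := ltnP 1 (size (undup x)).
  have xV : {subset x <= undup x} by move=> a; rewrite mem_undup.
  have [x' [x'_sub x'_le equ]] := prof_equiv_short l V_gt1 xV.
  by exists x'; split; [apply/allP | split; last apply: Dprof_eq].
case: x V_le1 => [|c s] V_le1; first by exists [::].
exists [:: c]; split; first by rewrite /= mem_head.
split; first by rewrite expn_gt0.
by rewrite (nseq_undup_le1 (mem_head c s) V_le1); apply/Dprof_eq/prof_equiv_nseq.
Qed.
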